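(* Let $\mathfrak{g}$ be a Leibniz algebra and $\mathfrak{h}$ a two-sided ideal of $\mathfrak{g}$ with $\mathfrak{h} \subseteq Z_{\mathrm{Lie}}(\mathfrak{g})$. (a) $\mathfrak{g}$ is $\mathrm{Lie}$-nilpotent if and only if $\mathfrak{g}/\mathfrak{h}$ is $\mathrm{Lie}$-nilpotent. (b) If $f:\mathfrak{g}\twoheadrightarrow\mathfrak{q}$ is a $\mathrm{Lie}$-central extension of a Leibniz algebra $\mathfrak{q}$, then $\mathfrak{g}$ is $\mathrm{Lie}$-nilpotent if and only if $\mathfrak{q}$ is $\mathrm{Lie}$-nilpotent.
   Context: Fix a field $\mathbb{K}$ with $\frac12\in\mathbb{K}$. A Leibniz algebra is a $\mathbb{K}$-vector space with a bilinear bracket satisfying $[x,[y,z]]=[[x,y],z]-[[x,z],y]$. For two-sided ideals $\mathfrak{m},\mathfrak{n}$ of a Leibniz algebra $\mathfrak{g}$, the $\mathrm{Lie}$-commutator $[\mathfrak{m},\mathfrak{n}]_{\mathrm{Lie}}$ is the subspace spanned by all $[m,n]+[n,m]$, $m\in\mathfrak{m}$, $n\in\mathfrak{n}$. The $\mathrm{Lie}$-center is $Z_{\mathrm{Lie}}(\mathfrak{g})=\{z\in\mathfrak{g}: [q,z]+[z,q]=0 \text{ for all } q\in\mathfrak{g}\}$. A surjective homomorphism $f:\mathfrak{g}\to\mathfrak{q}$ is a $\mathrm{Lie}$-central extension if $\ker f\subseteq Z_{\mathrm{Lie}}(\mathfrak{g})$. The lower $\mathrm{Lie}$-central series is $\mathfrak{g}^{[1]}=\mathfrak{g}$,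 $\mathfrak{g}^{[i]}=[\mathfrak{g}^{[i-1]},\mathfrak{g}]_{\mathrm{Lie}}$; $\mathfrak{g}$ is $\mathrm{Lie}$-nilpotent if $\mathfrak{g}^{[k]}=0$ for some $k$. *)

From HB Require Import structures.
From mathcomp Require Import all_boot all_order all_algebra.
Set Implicit Arguments. Unset Strict Implicit. Unset Printing Implicit Defensive.
Import GRing.Theory.
Local Open Scope ring_scope.

Section Leibniz.
Variable K : fieldType.

Definition is_leibniz (V : lmodType K) (br : V -> V -> V) : Prop :=
  (forall (a : K) (x y z : V), br (a *: x + y) z = a *: br x z + br y z) /\
  (forall (a : K) (x y z : V), br x (a *: y + z) = a *: br x y + br x z) /\
  (forall x y z : V, br x (br y z) = br (br x y) z - br (br x z) y).

Definition is_subspace (V : lmodType K) (S : V -> Prop) : Prop :=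
  S 0 /\ (forall (a : K) (x y : V), S x -> S y -> S (a *: x + y)).

Definition is_ideal (V : lmodType K) (br : V -> V -> V) (I : V -> Prop) : Prop :=
  is_subspace I /\ (forall x i, I i -> I (br x i) /\ I (br i x)).

(* [m, n]_Lie : the subspace spanned by all [m,n] + [n,m]. *)
Definition lie_comm (V : lmodType K) (br : V -> V -> V) (M N : V -> Prop) : V -> Prop :=
  fun x => forall S : V -> Prop, is_subspace S ->
    (forall m n, M m -> N n -> S (br m n + br n m)) -> S x.

Definition lie_center (V : lmodType K) (br : V -> V -> V) : V -> Prop :=
  fun z => forall q, br q z + br z q = 0.

(* Lower Lie-central series: lcs br 0 = g = g^[1], lcs br (S i) = g^[i+2]. *)
Fixpoint lcs (V : lmodType K) (br : V -> V -> V) (i : nat) : V -> Prop :=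
  match i with
  | O => fun _ => True
  | S j => lie_comm br (lcs br j) (fun _ => True)
  end.

Definition lie_nilpotent (V : lmodType K) (br : V -> V -> V) : Prop :=
  exists k, forall x, lcs br k x -> x = 0.

Definition is_hom (V W : lmodType K) (brV : V -> V -> V) (brW : W -> W -> W)
  (f : V -> W) : Prop :=
  (forall (a : K) (x y : V), f (a *: x + y) = a *: f x + f y) /\
  (forall x y, f (brV x y) = brW (f x) (f y)).

Definition surj (V W : Type) (f : V -> W) : Prop := forall w, exists v, f v = w.

Definition lie_central_ext (V W : lmodType K) (brV : V -> V -> V)
  (brW : W -> W -> W) (f : V -> W) : Prop :=
  is_hom brV brW f /\ surj f /\ (forall x, f x = 0 -> lie_center brV x).

End Leibniz.

(** A surjective homomorphism maps each term of the lower Lie-central series of [g]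
onto the corresponding term for [q], so nilpotency passes from [g] to [q].
Conversely, if [q^[k] = 0] then [g^[k]] lies in the kernel, hence in the
Lie-center, so every generator [[m, n] + [n, m]] of [g^[k+1]] vanishes. *)
From mathcomp Require Import all_boot all_order all_algebra.
Local Open Scope ring_scope.
Import GRing.Theory.

Set Implicit Arguments.
Unset Strict Implicit.

Section LieCommutator.
Variables (K : fieldType) (V : lmodType K) (br : V -> V -> V).

Lemma lie_comm_subspace (M N : V -> Prop) : is_subspace (lie_comm br M N).
Proof.
split=> [S [S0 _] _ // | a x y Mx My S SS gen].
by case: (SS) => _ SD; apply: SD; [apply: Mx | apply: My].
Qed.

Lemma lie_comm_gen (M N : V -> Prop) m n :
  M m -> N n -> lie_comm br M N (br m n + br n m).
Proof. by move=> Mm Nn S _ gen; apply: gen. Qed.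

Lemma lie_comm_center0 (M N : V -> Prop) :
  (forall m, M m -> lie_center br m) -> forall x, lie_comm br M N x -> x = 0.
Proof.
move=> Mcenter x /(_ (eq^~ 0)); apply.
  by split=> // a _ _ -> ->; rewrite scaler0 addr0.
by move=> m n Mm _; rewrite addrC; apply: Mcenter.
Qed.

End LieCommutator.

Section Homomorphism.
Variables (K : fieldType) (V W : lmodType K).
Variables (brV : V -> V -> V) (brW : W -> W -> W) (f : V -> W).
Hypothesis f_hom : is_hom brV brW f.

Lemma hom0 : f 0 = 0.
Proof.
have [f_lin _] := f_hom; have := f_lin (-1) 0 0.
by rewrite scaler0 addr0 scaleN1r addNr.
Qed.

Lemma hom_lie_bracket x y :
  f (brV x y + brV y x) = brW (f x) (f y) + brW (f y) (f x).
Proof.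
by have [f_lin f_br] := f_hom; rewrite -[brV x y]scale1r f_lin scale1r !f_br.
Qed.

Lemma lie_comm_hom (M N : V -> Prop) (M' N' : W -> Prop) :
  (forall m, M m -> M' (f m)) -> (forall n, N n -> N' (f n)) ->
  forall x, lie_comm brV M N x -> lie_comm brW M' N' (f x).
Proof.
move=> fM fN x /(_ (fun x => lie_comm brW M' N' (f x))).
have [W0 WD] := lie_comm_subspace brW M' N'; apply.
  by split=> [|a y z My Mz]; [rewrite hom0 | case: f_hom => -> _; apply: WD].
move=> m n Mm Nn; rewrite hom_lie_bracket.
by apply: lie_comm_gen; [apply: fM | apply: fN].
Qed.

Lemma lie_comm_hom_onto (M N : V -> Prop) (M' N' : W -> Prop) :
  (forall m', M' m' -> exists2 m, M m & f m = m') ->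
  (forall n', N' n' -> exists2 n, N n & f n = n') ->
  forall y, lie_comm brW M' N' y -> exists2 x, lie_comm brV M N x & f x = y.
Proof.
move=> ontoM ontoN y /(_ (fun y => exists2 x, lie_comm brV M N x & f x = y)).
have [V0 VD] := lie_comm_subspace brV M N; apply.
  split; first by exists 0; [apply: V0 | rewrite hom0].
  move=> a _ _ [x Mx <-] [x' Mx' <-]; exists (a *: x + x'); first exact: VD.
  by case: f_hom.
move=> _ _ /ontoM[m Mm <-] /ontoN[n Nn <-].
by exists (brV m n + brV n m); [apply: lie_comm_gen | rewrite hom_lie_bracket].
Qed.

Lemma lcs_hom i x : lcs brV i x -> lcs brW i (f x).
Proof. by elim: i x => // i IH; apply: lie_comm_hom. Qed.

Hypothesis f_surj : surj f.

Lemma lcs_hom_onto i y : lcs brW i y -> exists2 x, lcs brV i x & f x = y.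
Proof.
elim: i y => [y _ | i IH]; first by have [x <-] := f_surj y; exists x.
apply: lie_comm_hom_onto => // n' _; have [n <-] := f_surj n'; by exists n.
Qed.

Lemma lie_nilpotent_hom_onto : lie_nilpotent brV -> lie_nilpotent brW.
Proof.
move=> [k lcs0]; exists k => y /lcs_hom_onto[x /lcs0 -> <-]; exact: hom0.
Qed.

End Homomorphism.

Lemma lie_nilpotent_lie_central_ext (K : fieldType) (V W : lmodType K)
    (brV : V -> V -> V) (brW : W -> W -> W) (f : V -> W) :
  lie_central_ext brV brW f -> lie_nilpotent brV <-> lie_nilpotent brW.
Proof.
move=> [f_hom [f_surj ker_center]]; split.
  exact: lie_nilpotent_hom_onto f_hom f_surj.
move=> [k lcs0]; exists k.+1; apply: lie_comm_center0 => m /(lcs_hom f_hom).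
by move/lcs0/ker_center.
Qed.

Theorem mainTheorem1 (K : fieldType) (h2 : (2 : K) != 0)
  (G : lmodType K) (br : G -> G -> G) (hG : is_leibniz br) :
  (* (a): g/h is represented by any surjective hom with kernel exactly h *)
  (forall h : G -> Prop, is_ideal br h -> (forall x, h x -> lie_center br x) ->
     forall (Q : lmodType K) (brQ : Q -> Q -> Q) (f : G -> Q),
       is_leibniz brQ -> is_hom br brQ f -> surj f ->
       (forall x, f x = 0 <-> h x) ->
       (lie_nilpotent br <-> lie_nilpotent brQ)) /\
  (* (b) *)
  (forall (Q : lmodType K) (brQ : Q -> Q -> Q) (f : G -> Q),
     is_leibniz brQ -> lie_central_ext br brQ f ->
     (lie_nilpotent br <-> lie_nilpotent brQ)).
Proof.
split=> [h _ h_center Q brQ f _ f_hom f_surj ker_h | Q brQ f _ f_ext].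
  apply: lie_nilpotent_lie_central_ext; split; first exact: f_hom.
  by split=> // x /ker_h; apply: h_center.
exact: lie_nilpotent_lie_central_ext f_ext.
Qed.
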